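(* Let $n\ge 1$ and let $C\in\mathcal{C}_n$ be an $n$-qubit Clifford unitary. Write, for $i=1,\dots,n$, $$C Z_i C^\dagger = (-1)^{f_i} P^{\vec a_i,\vec b_i},\qquad C X_i C^\dagger = (-1)^{h_i} P^{\vec c_i,\vec d_i},$$ with $\vec a_i,\vec b_i,\vec c_i,\vec d_i\in\{0,1\}^n$ and $f_i,h_i\in\{0,1\}$, and let $$S=\begin{pmatrix} A & C'\\ B & D\end{pmatrix}\in\mathbb{F}_2^{2n\times 2n},$$ where $A,B,C',D\in\mathbb{F}_2^{n\times n}$ have $i$-th columns $\vec a_i,\vec b_i,\vec c_i,\vec d_i$ respectively ($S$ is the symplectic representation of the Pauli-sign-free part $\widetilde C$ of $C$, i.e. of the element of $\mathcal{C}_n/\mathcal{P}_n$ determined by $C$). Run the Twin-$C$ circuit on input bit strings $\vec i,\vec j\in\{0,1\}^n$, and let $\vec J=(\vec i,\vec j)\in\mathbb{F}_2^{2n}$ (column vector obtained by concatenation). Then the measurement output $\vec K=(\vec k,\vec \ell)\in\mathbb{F}_2^{2n}$ satisfies $$\vec K = S\vec J + \vec F_0 \pmod 2,$$ where $\vec F_0\in\{0,1\}^{2n}$ depends on $S$ but not on $\vec J$.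
   Context: Single-qubit Paulis: $X=\begin{pmatrix}0&1\\1&0\end{pmatrix}$, $Y=\begin{pmatrix}0&-i\\i&0\end{pmatrix}$, $Z=\begin{pmatrix}1&0\\0&-1\end{pmatrix}$; $X_j,Z_j$ act on qubit $j$. Labeling: $P^{00}=I$, $P^{01}=X$, $P^{10}=Z$, $P^{11}=Y$, and for $\vec a,\vec b\in\{0,1\}^n$, $P^{\vec a,\vec b}=P^{a_1b_1}\otimes\cdots\otimes P^{a_nb_n}$; equivalently $P^{\vec a,\vec b}=(-i)^{\vec a\cdot\vec b}\prod_{i} Z_i^{a_i}X_i^{b_i}$. The Pauli group is $\mathcal{P}_n=\{i^kP^{\vec a,\vec b}\}$ and the Clifford group is $\mathcal{C}_n=\{U\in U(2^n): U\mathcal{P}_nU^\dagger\subseteq\mathcal{P}_n\}$. Twin-$C$ circuit: two registers $\mathcal{A},\mathcal{B}$ of $n$ qubits each are prepared in the computational basis state $|\vec i\rangle_{\mathcal{A}}|\vec j\rangle_{\mathcal{B}}$; apply $H^{\otimes n}$ to $\mathcal{A}$; apply CNOTs from qubit $r$ of $\mathcal{A}$ (control) to qubit $r$ of $\mathcal{B}$ (target) for each $r=1,\dots,n$; apply $C$ to $\mathcal{A}$ and $C$ to $\mathcal{B}$; apply the same transversal CNOTs again; apply $H^{\otimes n}$ to $\mathcal{A}$; measure both registers in the computational basis, obtaining $\vec k$ on $\mathcal{A}$ and $\vec\ell$ on $\mathcal{B}$. (The last three steps constitute a Bell-basis measurement.) *)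

From HB Require Import structures.
From mathcomp Require Import all_boot all_order all_algebra.
Set Implicit Arguments. Unset Strict Implicit. Unset Printing Implicit Defensive.
Import GRing.Theory Num.Theory.
Local Open Scope ring_scope.

(* computational basis labels of m qubits: bit strings in F_2^m *)
Definition bits (m : nat) := 'cV['F_2]_m.
Definition qdim (m : nat) : nat := #|{: bits m}|.
Definition idx (m : nat) (x : bits m) : 'I_(qdim m) := enum_rank x.
Definition vec (m : nat) (p : 'I_(qdim m)) : bits m := enum_val p.
Definition bit (m : nat) (x : bits m) (r : 'I_m) : nat := val (x r 0).
Definition unitvec (m : nat) (r : 'I_m) : bits m := delta_mx r 0.

Section Ops.
Variable K : numClosedFieldType.

(* M p q = <p| M |q> *)
Definition adj (d : nat) (M : 'M[K]_d) : 'M[K]_d := (map_mx Num.conj M)^T.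
Definition unitary (d : nat) (U : 'M[K]_d) : Prop := U *m adj U = 1%:M.
Definition mxprod (d : nat) (I : finType) (F : I -> 'M[K]_d) : 'M[K]_d :=
  \big[@mulmx K d d d/1%:M]_(r : I) F r.
Definition mxpow (d : nat) (M : 'M[K]_d) (k : nat) : 'M[K]_d :=
  iter k (mulmx M) 1%:M.

Section Gates.
Variable m : nat.
Definition opZ (r : 'I_m) : 'M[K]_(qdim m) :=
  \matrix_(p, q) (if p == q then (-1) ^+ bit (vec q) r else 0).
Definition opX (r : 'I_m) : 'M[K]_(qdim m) :=
  \matrix_(p, q) ((vec p == vec q + unitvec r)%:R).
Definition opH (r : 'I_m) : 'M[K]_(qdim m) :=
  \matrix_(p, q)
    (if [forall s : 'I_m, (s != r) ==> (vec p s 0 == vec q s 0)]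
     then (-1) ^+ (bit (vec p) r * bit (vec q) r) / sqrtC 2 else 0).
Definition opCX (c t : 'I_m) : 'M[K]_(qdim m) :=
  \matrix_(p, q) ((vec p == vec q + (vec q c 0) *: unitvec t)%:R).

Definition pauli (a b : bits m) : 'M[K]_(qdim m) :=
  (- 'i) ^+ (\sum_(r < m) bit a r * bit b r)%N *:
    mxprod (fun r : 'I_m => mxpow (opZ r) (bit a r) *m mxpow (opX r) (bit b r)).

Definition in_pauli_group (M : 'M[K]_(qdim m)) : Prop :=
  exists (k : nat) (a b : bits m), M = 'i ^+ k *: pauli a b.

Definition clifford (U : 'M[K]_(qdim m)) : Prop :=
  unitary U /\
  forall M, in_pauli_group M -> in_pauli_group (U *m M *m adj U).
End Gates.

(* U (x) V acting on registers A (first n qubits) and B (last n qubits) *)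
Definition tens (n : nat) (U V : 'M[K]_(qdim n)) : 'M[K]_(qdim (n + n)) :=
  \matrix_(p, q)
    (U (idx (usubmx (vec p))) (idx (usubmx (vec q))) *
     V (idx (dsubmx (vec p))) (idx (dsubmx (vec q)))).

Definition HA (n : nat) : 'M[K]_(qdim (n + n)) :=
  mxprod (fun r : 'I_n => opH (lshift n r)).
Definition CXs (n : nat) : 'M[K]_(qdim (n + n)) :=
  mxprod (fun r : 'I_n => opCX (lshift n r) (rshift n r)).

Definition twinC (n : nat) (C : 'M[K]_(qdim n)) : 'M[K]_(qdim (n + n)) :=
  HA n *m CXs n *m tens C C *m CXs n *m HA n.

(* amplitude <k,l| Twin-C |i,j> ; outcome K has nonzero probability iff nonzero *)
Definition twin_amp (n : nat) (C : 'M[K]_(qdim n)) (i j k l : bits n) : K :=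
  twinC C (idx (col_mx k l)) (idx (col_mx i j)).
End Ops.

Definition symp (n : nat) (a b c d : 'I_n -> bits n) : 'M['F_2]_(n + n) :=
  block_mx (\matrix_(p, q) a q p 0) (\matrix_(p, q) c q p 0)
           (\matrix_(p, q) b q p 0) (\matrix_(p, q) d q p 0).

(* Up to the factor 2^-n, the amplitude <k,l| Twin-C |i,j> is
   sum_(x,y) (-1)^(k.y + x.i) C_(y,x) C_(l+y, j+x).  Pushing Z_r (resp. X_r) through
   both copies of C with C Z_r C^+ = +-P^(a_r,b_r) (resp. C X_r C^+ = +-P^(c_r,d_r)) and
   re-indexing the sum multiplies it by a sign, so a nonzero amplitude forces
   j_r = a_r.b_r + a_r.l + k.b_r and i_r = c_r.d_r + c_r.l + k.d_r, i.e.
   J = S' K + v with S' = Omega S^T Omega.  Paulis commute up to (-1)^(a.b' + b.a') and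
   conjugation by C preserves these signs, so S is symplectic: S' S = 1.  Hence
   K = S J + S v. *)

From HB Require Import structures.
From mathcomp Require Import all_boot all_order all_algebra.
From mathcomp Require Import ring.
Import GRing.Theory Num.Theory.
Local Open Scope ring_scope.
Set Implicit Arguments. Unset Strict Implicit. Unset Printing Implicit Defensive.

Lemma F2_cases (u : 'F_2) : u = 0 \/ u = 1.
Proof. case: u => [[|[|k]] Hk]; [left|right|by []]; exact: val_inj. Qed.

Lemma addrr_F2 (u : 'F_2) : u + u = 0.
Proof. exact/addrr_pchar2/pchar_Fp. Qed.

Lemma bitsP m (x y : bits m) : (forall t, x t 0 = y t 0) -> x = y.
Proof. by move=> H; apply/matrixP => t j; rewrite (ord1 j). Qed.

Lemma addrr_bits m (x : bits m) : x + x = 0.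
Proof. by apply/bitsP => t; rewrite !mxE addrr_F2. Qed.

Lemma addrK_bits m (x y : bits m) : x + y + y = x.
Proof. by rewrite -addrA addrr_bits addr0. Qed.

Lemma eq_addr_bits m (x y z : bits m) : (x == z + y) = (z == x + y).
Proof. by apply/eqP/eqP => ->; rewrite addrK_bits. Qed.

Lemma unitvecE m (r p : 'I_m) : unitvec r p 0 = (p == r)%:R.
Proof. by rewrite mxE andbT. Qed.

Definition dot m (x y : bits m) : 'F_2 := \sum_r x r 0 * y r 0.

Lemma dotDr m (u v w : bits m) : dot u (v + w) = dot u v + dot u w.
Proof. by rewrite /dot -big_split; apply: eq_bigr => r _; rewrite mxE mulrDr. Qed.

Lemma dotDl m (u v w : bits m) : dot (v + w) u = dot v u + dot w u.
Proof. by rewrite /dot -big_split; apply: eq_bigr => r _; rewrite mxE mulrDl. Qed.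

Lemma dotC m (u v : bits m) : dot u v = dot v u.
Proof. by apply: eq_bigr => r _; rewrite mulrC. Qed.

Lemma dot0r m (u : bits m) : dot 0 u = 0.
Proof. by rewrite /dot big1 // => r _; rewrite mxE mul0r. Qed.

Lemma dot_unitvec m (r : 'I_m) (u : bits m) : dot (unitvec r) u = u r 0.
Proof.
rewrite /dot (bigD1 r) //= unitvecE eqxx mul1r big1 ?addr0 // => p /negbTE pr.
by rewrite unitvecE pr mul0r.
Qed.

Lemma mul_trmx_dot n (M : 'I_n -> bits n) (v : bits n) r :
  ((\matrix_(p, q) M q p 0)^T *m v) r 0 = dot (M r) v.
Proof. by rewrite mxE; apply: eq_bigr => p _; rewrite !mxE. Qed.

Lemma mul_trmx_family n (M N : 'I_n -> bits n) r t :
  ((\matrix_(p, q) M q p 0)^T *m (\matrix_(p, q) N q p 0)) r t = dot (M r) (N t).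
Proof. by rewrite mxE; apply: eq_bigr => p _; rewrite !mxE. Qed.

(* Omega S^T Omega, with Omega the swap of the two halves of F_2^(n+n). *)
Definition symp_adj n (S : 'M['F_2]_(n + n)) : 'M['F_2]_(n + n) :=
  block_mx (drsubmx S)^T (ursubmx S)^T (dlsubmx S)^T (ulsubmx S)^T.

Lemma symp_adj_mul n (a b c d : 'I_n -> bits n) :
  (forall r t, dot (a r) (b t) + dot (b r) (a t) = 0) ->
  (forall r t, dot (c r) (d t) + dot (d r) (c t) = 0) ->
  (forall r t, dot (a r) (d t) + dot (b r) (c t) = (r == t)%:R) ->
  symp_adj (symp a b c d) *m symp a b c d = 1%:M.
Proof.
move=> ZZ XX ZX; rewrite /symp_adj /symp block_mxKul block_mxKur block_mxKdl block_mxKdr.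
rewrite mulmx_block scalar_mx_block; congr block_mx; apply/matrixP => r t;
  rewrite [LHS]mxE !mul_trmx_family !mxE.
- by rewrite (dotC (d r)) (dotC (c r)) ZX eq_sym.
- by rewrite addrC XX.
- by rewrite addrC ZZ.
- by rewrite addrC ZX.
Qed.

Definition twin_offset n (S : 'M['F_2]_(n + n)) : 'cV['F_2]_(n + n) :=
  col_mx (\col_r dot (col r (ursubmx S)) (col r (drsubmx S)))
         (\col_r dot (col r (ulsubmx S)) (col r (dlsubmx S))).

Lemma col_family n (a : 'I_n -> bits n) r : col r (\matrix_(p, q) a q p 0) = a r.
Proof. by apply/bitsP => p; rewrite !mxE. Qed.

Section Amplitudes.
Variable K : numClosedFieldType.

Definition sgn2 (u : 'F_2) : K := (-1) ^+ val u.

Lemma sgn20 : sgn2 0 = 1. Proof. by []. Qed.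

Lemma sgn2D u v : sgn2 (u + v) = sgn2 u * sgn2 v.
Proof.
case: (F2_cases u) => ->; case: (F2_cases v) => ->; rewrite ?add0r ?addr0 ?mul1r ?mulr1 //.
by rewrite addrr_F2 /sgn2 /= mulrNN mulr1.
Qed.

Lemma sgn2_sq u : sgn2 u * sgn2 u = 1.
Proof. by rewrite -sgn2D addrr_F2. Qed.

Lemma sgn2_neq0 u : sgn2 u != 0.
Proof. by rewrite signr_eq0. Qed.

Lemma sgn2_inj : injective sgn2.
Proof.
have m1_neq1 : (-1 : K) != 1.
  by rewrite -subr_eq0 -opprD oppr_eq0 -(natrD K 1 1) pnatr_eq0.
move=> u v; case: (F2_cases u) => ->; case: (F2_cases v) => -> // /eqP;
  by rewrite /sgn2 /= ?expr0 ?expr1 ?(eq_sym 1) (negbTE m1_neq1).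
Qed.

Lemma sgn2M (u v : 'F_2) : (-1) ^+ (val u * val v)%N = sgn2 (u * v).
Proof.
by case: (F2_cases u) => ->; case: (F2_cases v) => ->; rewrite ?mul0r ?mulr0 ?mulr1.
Qed.

Lemma sgn2_sum (I : Type) (s : seq I) (P : pred I) (F : I -> 'F_2) :
  sgn2 (\sum_(i <- s | P i) F i) = \prod_(i <- s | P i) sgn2 (F i).
Proof. exact: (big_morph sgn2 sgn2D sgn20). Qed.

Lemma sum_bits m (F : 'I_(qdim m) -> K) : \sum_p F p = \sum_(x : bits m) F (idx x).
Proof.
rewrite (reindex (@idx m)) //.
by exists (@vec m) => z _; [exact: enum_rankK | exact: enum_valK].
Qed.

Lemma sum_pick m (F : bits m -> K) z : \sum_w (w == z)%:R * F w = F z.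
Proof.
rewrite (bigD1 z) //= eqxx mul1r big1 ?addr0 // => w /negbTE->; by rewrite mul0r.
Qed.

Lemma sum_col n (F : bits (n + n) -> K) :
  \sum_q F q = \sum_(y : bits n) \sum_(z : bits n) F (col_mx y z).
Proof.
rewrite pair_big (reindex (fun q : bits (n + n) => (usubmx q, dsubmx q))) /=.
  by apply: eq_bigr => q _; rewrite vsubmxK.
exists (fun p : bits n * bits n => col_mx p.1 p.2) => [q _|[u v] _] /=.
  by rewrite vsubmxK.
by rewrite col_mxKu col_mxKd.
Qed.

Definition mxb m (M : 'M[K]_(qdim m)) (x y : bits m) := M (idx x) (idx y).

Lemma mxbP m (M N : 'M[K]_(qdim m)) : (forall x y, mxb M x y = mxb N x y) -> M = N.
Proof.
by move=> H; apply/matrixP => p q; rewrite -(enum_valK p) -(enum_valK q); apply: H.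
Qed.

Lemma mxb_mul m (M N : 'M[K]_(qdim m)) x y :
  mxb (M *m N) x y = \sum_w mxb M x w * mxb N w y.
Proof. by rewrite /mxb mxE sum_bits. Qed.

(* Every gate of the circuit and every Pauli operator is a monomial matrix, so products
   of them reduce to composing the index maps and multiplying the phases. *)
Definition monomx m (g : bits m -> bits m) (phi : bits m -> K) : 'M[K]_(qdim m) :=
  \matrix_(p, q) ((vec p == g (vec q))%:R * phi (vec q)).

Lemma mxb_monomx m g phi (x y : bits m) : mxb (monomx g phi) x y = (x == g y)%:R * phi y.
Proof. by rewrite /mxb mxE /vec !enum_rankK. Qed.

Lemma eq_monomx m g g' phi phi' :
  g =1 g' -> phi =1 phi' -> @monomx m g phi = monomx g' phi'.
Proof. by move=> Hg Hp; apply: mxbP => x y; rewrite !mxb_monomx Hg Hp. Qed.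

Lemma mxb_mulmx_monomx m (M : 'M[K]_(qdim m)) g phi x y :
  mxb (M *m monomx g phi) x y = mxb M x (g y) * phi y.
Proof.
rewrite mxb_mul -(sum_pick (fun w => mxb M x w * phi y) (g y)).
by apply: eq_bigr => w _; rewrite mxb_monomx mulrCA.
Qed.

Lemma mxb_monomx_mulmx m (M : 'M[K]_(qdim m)) g phi x y :
  involutive g -> mxb (monomx g phi *m M) x y = phi (g x) * mxb M (g x) y.
Proof.
move=> Hg; rewrite mxb_mul -(sum_pick (fun w => phi w * mxb M w y) (g x)).
apply: eq_bigr => w _; rewrite mxb_monomx -mulrA.
suff -> : (x == g w) = (w == g x) by [].
by apply/eqP/eqP => ->; rewrite Hg.
Qed.

Lemma monomx_mul m g1 phi1 g2 phi2 :
  @monomx m g1 phi1 *m monomx g2 phi2 = monomx (g1 \o g2) (fun x => phi1 (g2 x) * phi2 x).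
Proof. by apply: mxbP => x y; rewrite mxb_mulmx_monomx !mxb_monomx mulrA. Qed.

Lemma monomx1 m : 1%:M = @monomx m id (fun _ => 1).
Proof.
apply: mxbP => x y; rewrite mxb_monomx /mxb !mxE mulr1.
by rewrite (inj_eq (can_inj (@enum_rankK _))).
Qed.

Lemma scale_monomx m (c : K) g phi : c *: @monomx m g phi = monomx g (fun y => c * phi y).
Proof. by apply: mxbP => x y; rewrite mxb_monomx /mxb mxE -/(mxb _ _ _) mxb_monomx mulrCA. Qed.

Lemma monomx_neq0 m g phi : phi 0 != 0 -> @monomx m g phi != 0.
Proof.
move=> nz; apply: contraNneq nz => H.
by move: (mxb_monomx g phi (g 0) 0); rewrite H eqxx mul1r /mxb mxE => <-.
Qed.

Lemma opZ_monomx m (r : 'I_m) : opZ K r = monomx id (fun y => sgn2 (y r 0)).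
Proof.
apply: mxbP => x y; rewrite mxb_monomx /mxb mxE /vec !enum_rankK.
by rewrite (inj_eq (can_inj (@enum_rankK _))); case: eqP; rewrite ?mul1r ?mul0r.
Qed.

Lemma opX_monomx m (r : 'I_m) : opX K r = monomx (fun y => y + unitvec r) (fun _ => 1).
Proof. by apply: mxbP => x y; rewrite mxb_monomx /mxb mxE /vec !enum_rankK mulr1. Qed.

Lemma opCX_monomx m (c t : 'I_m) :
  opCX K c t = monomx (fun y => y + y c 0 *: unitvec t) (fun _ => 1).
Proof. by apply: mxbP => x y; rewrite mxb_monomx /mxb mxE /vec !enum_rankK mulr1. Qed.

Lemma mxpow_opZ m (r : 'I_m) (a : bits m) :
  mxpow (opZ K r) (bit a r) = monomx id (fun y => sgn2 (a r 0 * y r 0)).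
Proof.
rewrite /bit; case: (F2_cases (a r 0)) => ->.
  by rewrite /= monomx1; apply: eq_monomx => // y; rewrite mul0r.
by rewrite /= mulmx1 opZ_monomx; apply: eq_monomx => // y; rewrite mul1r.
Qed.

Lemma mxpow_opX m (r : 'I_m) (b : bits m) :
  mxpow (opX K r) (bit b r) = monomx (fun y => y + b r 0 *: unitvec r) (fun _ => 1).
Proof.
rewrite /bit; case: (F2_cases (b r 0)) => ->.
  by rewrite /= monomx1; apply: eq_monomx => // y; rewrite scale0r addr0.
by rewrite /= mulmx1 opX_monomx; apply: eq_monomx => // y; rewrite scale1r.
Qed.

Lemma sum_unitvec_notin m (s : seq 'I_m) (c : 'I_m -> 'F_2) p :
  p \notin s -> (\sum_(r <- s) c r *: unitvec r) p 0 = 0.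
Proof.
move=> ps; rewrite summxE big1_seq // => r /andP[_ rs].
by rewrite mxE unitvecE; case: eqP ps => [->|_]; rewrite ?rs ?mulr0.
Qed.

Lemma sum_unitvec m (b : bits m) : \sum_(r : 'I_m) b r 0 *: unitvec r = b.
Proof.
apply/bitsP => p; rewrite summxE (bigD1 p) //= big1 ?addr0 => [|r /negbTE rp];
  by rewrite mxE unitvecE ?eqxx ?mulr1 // eq_sym rp mulr0.
Qed.

Lemma prod_ZX m (a b : bits m) (s : seq 'I_m) : uniq s ->
  \big[@mulmx K _ _ _/1%:M]_(r <- s) (mxpow (opZ K r) (bit a r) *m mxpow (opX K r) (bit b r))
  = monomx (fun y => y + \sum_(r <- s) b r 0 *: unitvec r)
           (fun y => sgn2 (\sum_(r <- s) a r 0 * (y r 0 + b r 0))).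
Proof.
elim: s => [|r s IH] /=.
  by move=> _; rewrite big_nil monomx1; apply: eq_monomx => y; rewrite big_nil ?addr0.
case/andP => rs us; rewrite big_cons IH // mxpow_opZ mxpow_opX !monomx_mul.
apply: eq_monomx => y /=; first by rewrite big_cons [b r 0 *: _ + _]addrC addrA.
by rewrite big_cons sgn2D mulr1 !mxE sum_unitvec_notin // eqxx addr0 mulr1.
Qed.

Definition pauli_phase m (a b : bits m) : K := (- 'i) ^+ (\sum_(r < m) bit a r * bit b r)%N.

Lemma pauli_phase_neq0 m (a b : bits m) : pauli_phase a b != 0.
Proof. by rewrite expf_neq0 // oppr_eq0 neq0Ci. Qed.

Lemma pauli_phase_sq m (a b : bits m) : pauli_phase a b ^+ 2 = sgn2 (dot a b).
Proof.
rewrite -exprM mulnC exprM sqrrN sqrCi /dot sgn2_sum.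
elim: (index_enum _) => [|r s IH]; first by rewrite !big_nil expr0.
by rewrite !big_cons exprD IH /bit sgn2M.
Qed.

Lemma pauli_monomx m (a b : bits m) :
  pauli K a b = monomx (fun y => y + b) (fun y => pauli_phase a b * sgn2 (dot a (y + b))).
Proof.
rewrite /pauli /mxprod prod_ZX ?index_enum_uniq // scale_monomx.
apply: eq_monomx => y; first by rewrite sum_unitvec.
by rewrite /dot; congr (_ * sgn2 _); apply: eq_bigr => r _; rewrite !mxE.
Qed.

Lemma pauli_Z m (r : 'I_m) : pauli K (unitvec r) 0 = opZ K r.
Proof.
rewrite pauli_monomx opZ_monomx /pauli_phase big1 => [|t _]; last first.
  by rewrite /bit [(0 : bits m) t 0]mxE muln0.
by apply: eq_monomx => y; rewrite ?addr0 // mul1r dot_unitvec.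
Qed.

Lemma pauli_X m (r : 'I_m) : pauli K 0 (unitvec r) = opX K r.
Proof.
rewrite pauli_monomx opX_monomx /pauli_phase big1 => [|t _]; last first.
  by rewrite /bit [(0 : bits m) t 0]mxE.
by apply: eq_monomx => y; rewrite // dot0r mulr1.
Qed.

Lemma pauli_comm m (a b a' b' : bits m) :
  pauli K a b *m pauli K a' b' = sgn2 (dot a b' + dot b a') *: (pauli K a' b' *m pauli K a b).
Proof.
rewrite !pauli_monomx !monomx_mul scale_monomx.
apply: eq_monomx => y /=; first by rewrite addrAC.
rewrite (dotC b a') !dotDr !sgn2D.
by rewrite -[LHS]mulr1 -[X in _ * X = _](sgn2_sq (dot a' b)); ring.
Qed.

Lemma pauli_mul_neq0 m (a b a' b' : bits m) : pauli K a b *m pauli K a' b' != 0.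
Proof.
by rewrite !pauli_monomx monomx_mul monomx_neq0 // !mulf_neq0 ?pauli_phase_neq0 ?sgn2_neq0.
Qed.

Lemma scaler_cancel d (M : 'M[K]_d) (x y : K) : M != 0 -> x *: M = y *: M -> x = y.
Proof.
move=> nM /eqP; rewrite -subr_eq0 -scalerBl scaler_eq0 (negbTE nM) orbF subr_eq0.
exact/eqP.
Qed.

Lemma conjM m (U M N : 'M[K]_(qdim m)) : unitary U ->
  U *m (M *m N) *m adj U = (U *m M *m adj U) *m (U *m N *m adj U).
Proof. by move=> /mulmx1C HU; rewrite !mulmxA -(mulmxA _ (adj U)) HU mulmx1. Qed.

Lemma conj_pauli_comm m (U G G' : 'M[K]_(qdim m)) (s s' : K) (a b a' b' : bits m) e :
  unitary U -> s * s' != 0 -> G *m G' = sgn2 e *: (G' *m G) ->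
  U *m G *m adj U = s *: pauli K a b -> U *m G' *m adj U = s' *: pauli K a' b' ->
  dot a b' + dot b a' = e.
Proof.
move=> HU nss' HGG' HG HG'.
have scaleM (c c' : K) (M N : 'M[K]_(qdim m)) : (c *: M) *m (c' *: N) = (c * c') *: (M *m N).
  by rewrite -scalemxAl -scalemxAr scalerA.
have := congr1 (fun M => U *m M *m adj U) HGG'.
rewrite /= -scalemxAr -scalemxAl !conjM // HG HG' [LHS]scaleM [in RHS]scaleM.
rewrite pauli_comm !scalerA => /(scaler_cancel (pauli_mul_neq0 _ _ _ _)).
by rewrite (mulrC s') [RHS]mulrC => /(mulfI nss')/sgn2_inj.
Qed.

Lemma opZ_comm m (r t : 'I_m) : opZ K r *m opZ K t = sgn2 0 *: (opZ K t *m opZ K r).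
Proof. by rewrite -!pauli_Z pauli_comm !dot0r dotC dot0r addr0. Qed.

Lemma opX_comm m (r t : 'I_m) : opX K r *m opX K t = sgn2 0 *: (opX K t *m opX K r).
Proof. by rewrite -!pauli_X pauli_comm !dot0r dotC dot0r addr0. Qed.

Lemma opZX_comm m (r t : 'I_m) :
  opZ K r *m opX K t = sgn2 (r == t)%:R *: (opX K t *m opZ K r).
Proof. by rewrite -pauli_Z -pauli_X pauli_comm dot0r addr0 dot_unitvec unitvecE eq_sym. Qed.

Lemma clifford_symp_adj n (C : 'M[K]_(qdim n)) (a b c d : 'I_n -> bits n)
    (f h : 'I_n -> bool) :
  unitary C ->
  (forall r, C *m opZ K r *m adj C = (-1) ^+ f r *: pauli K (a r) (b r)) ->
  (forall r, C *m opX K r *m adj C = (-1) ^+ h r *: pauli K (c r) (d r)) ->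
  symp_adj (symp a b c d) *m symp a b c d = 1%:M.
Proof.
move=> HC HZ HX.
have sgn_neq0 (e e' : bool) : (-1) ^+ e * (-1) ^+ e' != 0 :> K.
  by rewrite mulf_neq0 ?signr_eq0.
apply: symp_adj_mul => r t; apply: (conj_pauli_comm HC (sgn_neq0 _ _)) => //;
  [exact: opZ_comm | exact: opX_comm | exact: opZX_comm].
Qed.

Lemma mxb1 m (x y : bits m) : mxb 1%:M x y = (x == y)%:R.
Proof. by rewrite monomx1 mxb_monomx mulr1. Qed.

Lemma mxb_opH m (r : 'I_m) (x y : bits m) :
  mxb (opH K r) x y = [forall t, (t != r) ==> (x t 0 == y t 0)]%:R *
                      (sqrtC 2)^-1 * sgn2 (x r 0 * y r 0).
Proof.
rewrite /mxb mxE /vec !enum_rankK /bit sgn2M.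
by case: ifP; rewrite ?mul1r ?mul0r // mulrC.
Qed.

Lemma mxb_prod_opH m (s : seq 'I_m) (x y : bits m) : uniq s ->
  mxb (\big[@mulmx K _ _ _/1%:M]_(r <- s) opH K r) x y =
  [forall t, (t \notin s) ==> (x t 0 == y t 0)]%:R * (sqrtC 2)^-1 ^+ size s *
  sgn2 (\sum_(r <- s) x r 0 * y r 0).
Proof.
elim: s x => [|r s IH] x.
  rewrite big_nil mxb1 big_nil expr0 mulr1 sgn20 mulr1 => _; congr (nat_of_bool _)%:R.
  apply/eqP/forallP => [-> t|H]; first by rewrite eqxx implybT.
  by apply/bitsP => t; apply/eqP/(implyP (H t)).
case/andP => rs us; set w0 := x + (x r 0 + y r 0) *: unitvec r.
have w0E t : w0 t 0 = if t == r then y t 0 else x t 0.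
  rewrite mxE [X in _ + X]mxE unitvecE; case: eqP => [->|_]; last by rewrite mulr0 addr0.
  by rewrite mulr1 addrA addrr_F2 add0r.
rewrite big_cons mxb_mul (bigD1 w0) //= big1 ?addr0 => [|w /eqP w_neq]; last first.
  rewrite mxb_opH IH //.
  case H1 : [forall t, _]; last by rewrite !mul0r.
  case H2 : [forall t, _]; last by rewrite !mul0r mulr0.
  move/forallP: H1 => H1; move/forallP: H2 => H2.
  case: w_neq; apply/bitsP => t; rewrite w0E; case: eqP => [->|/eqP tr].
    by apply/eqP/(implyP (H2 r)).
  by apply/esym/eqP/(implyP (H1 t)).
rewrite mxb_opH IH // w0E eqxx big_cons sgn2D exprS.
have -> : [forall t, (t != r) ==> (x t 0 == w0 t 0)].
  by apply/forallP => t; rewrite w0E; case: eqP => //= _; exact: eqxx.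
have -> : [forall t, (t \notin s) ==> (w0 t 0 == y t 0)] =
          [forall t, (t \notin r :: s) ==> (x t 0 == y t 0)].
  apply: eq_forallb => t; rewrite in_cons negb_or w0E.
  by case: (t =P r) => [->|_] /=; rewrite ?rs ?eqxx.
rewrite (eq_big_seq (fun t => x t 0 * y t 0)) => [|t ts]; last first.
  by rewrite w0E; case: (t =P r) ts rs => [->->|].
by rewrite mul1r; ring.
Qed.

Lemma mxb_HA n (u v u' v' : bits n) :
  mxb (HA K n) (col_mx u v) (col_mx u' v') =
  (v == v')%:R * (sqrtC 2)^-1 ^+ n * sgn2 (dot u u').
Proof.
rewrite /HA /mxprod -(big_map (lshift n) xpredT (@opH K (n + n))) mxb_prod_opH; last first.
  by rewrite map_inj_uniq ?index_enum_uniq //; apply: lshift_inj.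
have size_enum : size (index_enum 'I_n) = n by rewrite -[RHS]card_ord cardT enumT.
rewrite size_map size_enum big_map.
congr (_ * _ * sgn2 _); last by apply: eq_bigr => r _; rewrite !col_mxEu.
congr (nat_of_bool _)%:R; apply/forallP/eqP => [H|<- t].
  apply/bitsP => p; apply/eqP; move: (implyP (H (rshift n p))); rewrite !col_mxEd; apply.
  by apply/mapP => -[q _ /eqP]; rewrite eq_rlshift.
by apply/implyP; rewrite -(splitK t); case: (split t) => p;
  rewrite ?(mem_map (@lshift_inj _ _)) ?mem_index_enum //= !col_mxEd.
Qed.

Lemma prod_opCX n (s : seq 'I_n) :
  \big[@mulmx K _ _ _/1%:M]_(r <- s) opCX K (lshift n r) (rshift n r)
  = monomx (fun y => y + \sum_(r <- s) y (lshift n r) 0 *: unitvec (rshift n r)) (fun _ => 1).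
Proof.
elim: s => [|r s IH] /=.
  by rewrite big_nil monomx1; apply: eq_monomx => y; rewrite ?big_nil ?addr0.
rewrite big_cons IH opCX_monomx monomx_mul; apply: eq_monomx => y /=; last by rewrite mulr1.
rewrite [X in X *: _]mxE.
have -> : (\sum_(t <- s) y (lshift n t) 0 *: unitvec (rshift n t)) (lshift n r) 0 = 0.
  by rewrite summxE big1 // => t _; rewrite mxE unitvecE eq_lrshift mulr0.
by rewrite addr0 big_cons [_ *: unitvec _ + _]addrC addrA.
Qed.

Definition cnot_map n (y : bits (n + n)) : bits (n + n) :=
  col_mx (usubmx y) (dsubmx y + usubmx y).

Lemma cnot_map_invol n : involutive (@cnot_map n).
Proof. by move=> y; rewrite /cnot_map col_mxKu col_mxKd addrK_bits vsubmxK. Qed.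

Lemma CXs_monomx n : CXs K n = monomx (@cnot_map n) (fun _ => 1).
Proof.
rewrite /CXs /mxprod prod_opCX; apply: eq_monomx => // y; apply/bitsP => t.
rewrite /cnot_map [LHS]mxE summxE -(splitK t); case: (split t) => p /=.
  rewrite col_mxEu big1 ?addr0 => [|r _]; first by rewrite mxE.
  by rewrite mxE unitvecE eq_lrshift mulr0.
rewrite col_mxEd (bigD1 p) //= big1 => [|r /negbTE rp]; last first.
  by rewrite mxE unitvecE (inj_eq (@rshift_inj _ _)) eq_sym rp mulr0.
by rewrite [X in _ + (X + _)]mxE unitvecE eqxx mulr1 addr0 !mxE.
Qed.

Lemma sum_pick_r m (F : bits m -> K) z c : \sum_w F w * ((w == z)%:R * c) = F z * c.
Proof.
rewrite -(sum_pick (fun w => F w * c) z); apply: eq_bigr => w _.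
by rewrite mulrCA mulrA.
Qed.

Lemma sum_pick_l m (F : bits m -> K) z c : \sum_w ((w == z)%:R * c) * F w = c * F z.
Proof. by rewrite -(sum_pick (fun w => c * F w) z); apply: eq_bigr => w _; rewrite mulrA. Qed.

Lemma mxb_tens n (U V : 'M[K]_(qdim n)) y z x w :
  mxb (tens U V) (col_mx y z) (col_mx x w) = mxb U y x * mxb V z w.
Proof. by rewrite /mxb /tens mxE /vec !enum_rankK !col_mxKu !col_mxKd. Qed.

Definition twin_sum n (C : 'M[K]_(qdim n)) (i j k l : bits n) : K :=
  \sum_x \sum_y sgn2 (dot k y) * sgn2 (dot x i) * (mxb C y x * mxb C (l + y) (j + x)).

Lemma twin_amp_sum n (C : 'M[K]_(qdim n)) i j k l :
  twin_amp C i j k l = ((sqrtC 2)^-1 ^+ n) ^+ 2 * twin_sum C i j k l.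
Proof.
set c := (sqrtC 2)^-1 ^+ n.
have HA_CXs y z : mxb (HA K n *m CXs K n) (col_mx k l) (col_mx y z) =
    (z == l + y)%:R * (c * sgn2 (dot k y)).
  by rewrite CXs_monomx mxb_mulmx_monomx /cnot_map col_mxKu col_mxKd mxb_HA
    eq_addr_bits mulr1 mulrA.
have CXs_HA x w : mxb (CXs K n *m HA K n) (col_mx x w) (col_mx i j) =
    (w == j + x)%:R * (c * sgn2 (dot x i)).
  rewrite CXs_monomx mxb_monomx_mulmx; last exact: cnot_map_invol.
  by rewrite /cnot_map col_mxKu col_mxKd mxb_HA eq_sym eq_addr_bits mul1r mulrA.
have -> : twin_amp C i j k l =
    mxb (HA K n *m CXs K n *m tens C C *m (CXs K n *m HA K n)) (col_mx k l) (col_mx i j).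
  by rewrite /twin_amp /twinC !mulmxA.
rewrite mxb_mul sum_col /twin_sum mulr_sumr; apply: eq_bigr => x _.
under eq_bigr => w _ do rewrite CXs_HA mxb_mul sum_col.
rewrite sum_pick_r mulr_suml mulr_sumr; apply: eq_bigr => y _.
under eq_bigr => z _ do rewrite HA_CXs mxb_tens.
by rewrite sum_pick_l; ring.
Qed.

Lemma mxb_conj_pauli m (U G : 'M[K]_(qdim m)) (s : K) (a b : bits m) y x :
  unitary U -> U *m G *m adj U = s *: pauli K a b ->
  mxb (U *m G) y x = s * pauli_phase a b * sgn2 (dot a y) * mxb U (y + b) x.
Proof.
move=> /mulmx1C HU HG.
have -> : U *m G = (s *: pauli K a b) *m U by rewrite -HG -mulmxA HU mulmx1.
rewrite pauli_monomx scale_monomx mxb_monomx_mulmx => [|z]; last exact: addrK_bits.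
by rewrite addrK_bits mulrA.
Qed.

Lemma sign_pauli_phase_sq m (e : bool) (a b : bits m) :
  ((-1) ^+ e * pauli_phase a b) ^+ 2 = sgn2 (dot a b).
Proof. by rewrite exprMn sqrr_sign mul1r pauli_phase_sq. Qed.

Lemma twin_sum_opZ n (C : 'M[K]_(qdim n)) (e : bool) (a b : bits n) r i j k l :
  unitary C -> C *m opZ K r *m adj C = (-1) ^+ e *: pauli K a b ->
  twin_sum C i j k l != 0 -> j r 0 = dot a b + dot a l + dot k b.
Proof.
move=> HC HZ nT; set kp := (-1) ^+ e * pauli_phase a b.
have E y x : mxb C y x * sgn2 (x r 0) = kp * sgn2 (dot a y) * mxb C (y + b) x.
  by rewrite -(mxb_conj_pauli _ _ HC HZ) opZ_monomx mxb_mulmx_monomx.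
apply: sgn2_inj; apply: (mulIf nT); rewrite /twin_sum !mulr_sumr; apply: eq_bigr => x _.
rewrite !mulr_sumr [RHS](reindex_inj (addIr b)) /=; apply: eq_bigr => y _.
have -> : sgn2 (j r 0) = sgn2 (x r 0) * sgn2 ((j + x) r 0).
  by rewrite mxE sgn2D mulrCA sgn2_sq mulr1.
transitivity (sgn2 (dot k y) * sgn2 (dot x i) * ((mxb C y x * sgn2 (x r 0)) *
   (mxb C (l + y) (j + x) * sgn2 ((j + x) r 0)))); first by ring.
rewrite !E !dotDr !sgn2D -(sign_pauli_phase_sq e a b) -/kp (addrA l y b).
rewrite -[LHS]mulr1 -[X in _ * X = _](sgn2_sq (dot k b)).
by rewrite -[RHS]mulr1 -[X in _ = _ * X](sgn2_sq (dot a y)); ring.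
Qed.

Lemma twin_sum_opX n (C : 'M[K]_(qdim n)) (e : bool) (c d : bits n) r i j k l :
  unitary C -> C *m opX K r *m adj C = (-1) ^+ e *: pauli K c d ->
  twin_sum C i j k l != 0 -> i r 0 = dot c d + dot c l + dot k d.
Proof.
move=> HC HX nT; set kp := (-1) ^+ e * pauli_phase c d.
have E y x : mxb C y (x + unitvec r) = kp * sgn2 (dot c y) * mxb C (y + d) x.
  by rewrite -(mxb_conj_pauli _ _ HC HX) opX_monomx mxb_mulmx_monomx mulr1.
apply: sgn2_inj; apply: (mulIf nT); rewrite /twin_sum !mulr_sumr.
rewrite [LHS](reindex_inj (addIr (unitvec r))) /=; apply: eq_bigr => x _.
rewrite !mulr_sumr [RHS](reindex_inj (addIr d)) /=; apply: eq_bigr => y _.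
rewrite (addrA j x) !E dotDl dot_unitvec !dotDr !sgn2D -(sign_pauli_phase_sq e c d) -/kp.
rewrite (addrA l y d) -[LHS]mulr1 -[X in _ * X = _](sgn2_sq (dot k d)).
rewrite -[RHS]mulr1 -[X in _ = _ * X](sgn2_sq (dot c y)).
by rewrite -[RHS]mulr1 -[X in _ = _ * X](sgn2_sq (i r 0)); ring.
Qed.

Lemma twin_input n (C : 'M[K]_(qdim n)) (a b c d : 'I_n -> bits n) (f h : 'I_n -> bool)
    (i j k l : bits n) :
  unitary C ->
  (forall r, C *m opZ K r *m adj C = (-1) ^+ f r *: pauli K (a r) (b r)) ->
  (forall r, C *m opX K r *m adj C = (-1) ^+ h r *: pauli K (c r) (d r)) ->
  twin_sum C i j k l != 0 ->
  col_mx i j = symp_adj (symp a b c d) *m col_mx k l + twin_offset (symp a b c d).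
Proof.
move=> HC HZ HX nT; rewrite /symp_adj /twin_offset /symp.
rewrite block_mxKul block_mxKur block_mxKdl block_mxKdr mul_block_col add_col_mx.
congr col_mx; apply/bitsP => r; rewrite [RHS]mxE [X in X + _]mxE !mul_trmx_dot mxE !col_family.
  rewrite (twin_sum_opX HC (HX r) nT) (dotC k).
  by move: (dot (d r) (c r)) (dot (c r) l) (dot (d r) k) => u v w; ring.
rewrite (twin_sum_opZ HC (HZ r) nT) (dotC k).
by move: (dot (b r) (a r)) (dot (a r) l) (dot (b r) k) => u v w; ring.
Qed.

End Amplitudes.

Theorem lemma1 (K : numClosedFieldType) (n : nat) (hn : (0 < n)%N) :
  exists F0 : 'M['F_2]_(n + n) -> 'cV['F_2]_(n + n),
  forall (C : 'M[K]_(qdim n)) (a b c d : 'I_n -> bits n) (f h : 'I_n -> bool),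
    clifford C ->
    (forall r : 'I_n, C *m opZ K r *m adj C = (-1) ^+ f r *: pauli K (a r) (b r)) ->
    (forall r : 'I_n, C *m opX K r *m adj C = (-1) ^+ h r *: pauli K (c r) (d r)) ->
    forall i j k l : bits n,
      twin_amp C i j k l != 0 ->
      col_mx k l = symp a b c d *m col_mx i j + F0 (symp a b c d).
Proof.
exists (fun S => S *m twin_offset S).
move=> C a b c d f h [HC _] HZ HX i j k l Hamp.
have nT : twin_sum C i j k l != 0.
  by apply: contraNneq Hamp; rewrite twin_amp_sum => ->; rewrite mulr0.
have /mulmx1C HS := clifford_symp_adj HC HZ HX.
have HJ := twin_input HC HZ HX nT.
rewrite -[col_mx k l]mul1mx -HS -mulmxA.
rewrite -[_ *m col_mx k l](addrK_bits _ (twin_offset (symp a b c d))).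
by rewrite -HJ mulmxDr.
Qed.
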